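(* Let $N\ge4$ and $\kappa\in\mathbb R$ be such that the $2(N-1)^3\times2(N-1)^3$ block matrix $\tilde A=\begin{bmatrix}\tilde A^{11}&\tilde A^{12}\\ \tilde A^{21}&\tilde A^{22}\end{bmatrix}$ is nonsingular, and let $A=\begin{bmatrix}A^{11}&A^{12}\\ A^{21}&A^{22}\end{bmatrix}$. Then the eigenspace $\{\boldsymbol v:\tilde A^{-1}A\boldsymbol v=\boldsymbol v\}$ of $\tilde A^{-1}A$ associated with the eigenvalue $1$ has dimension $2(N-3)^3$.
   Context: $M,S$ are the $(N-1)\times(N-1)$ matrices $M_{mn}=(\psi_{n+1},\psi_{m+1})$, $S_{mn}=(\phi_n',\phi_m')$, with $(\cdot,\cdot)$ the $L^2(-1,1)$ inner product, $L_n$ the Legendre polynomial of degree $n$, $P_n^{(-1,-1)}=\frac{n-1}{2(2n-1)}(L_n-L_{n-2})$ ($n\ge2$), $\psi_{m+1}=\frac{\sqrt{2(2m+1)}}{m}P_{m+1}^{(-1,-1)}$, $\phi_m=\sqrt{\frac{2m+1}{2}}L_m$. $I$ is the $(N-1)\times(N-1)$ identity, $\otimes$ the Kronecker product. $A^{11}=S\otimes M\otimes I+S\otimes I\otimes M+I\otimes M\otimes S+I\otimes S\otimes M+2I\otimes I\otimes I+\kappa(I\otimes I\otimes M+I\otimes M\otimes I)$, $A^{22}=M\otimes S\otimes I+S\otimes I\otimes M+M\otimes I\otimes S+I\otimes S\otimes M+2I\otimes I\otimes I+\kappa(I\otimes I\otimes M+M\otimes I\otimes I)$, $A^{12}=A^{21}=S\otimes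 I\otimes M+I\otimes S\otimes M+I\otimes I\otimes I+\kappa I\otimes I\otimes M$, and $\tilde A^{ij}$ is obtained from $A^{ij}$ by replacing every occurrence of $S$ by $M^{-1}$. ($A$ is the interior-mode block of the divergence-free spectral Galerkin matrix for the 3D curl-curl problem $\nabla\times\nabla\times\boldsymbol u+\kappa\boldsymbol u=\boldsymbol f$.) *)

From HB Require Import structures.
From mathcomp Require Import all_boot all_order all_algebra.
From mathcomp Require Import reals.
From mathcomp.real_closed Require Import mxtens.
Set Implicit Arguments. Unset Strict Implicit. Unset Printing Implicit Defensive.
Import Order.TTheory GRing.Theory Num.Theory.
Local Open Scope ring_scope.

Section Defs.
Variable R : realType.

(* L^2(-1,1) integral of a polynomial: int_{-1}^{1} x^i dx = (1 - (-1)^(i+1))/(i+1) *)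
Definition poly_int11 (p : {poly R}) : R :=
  \sum_(i < size p) p`_i * ((1 - (-1) ^+ i.+1) / i.+1%:R).

Definition ip (p q : {poly R}) : R := poly_int11 (p * q).

Definition legendre (n : nat) : {poly R} :=
  ((2 ^+ n * (n`!)%:R)^-1) *: (('X ^+ 2 - 1) ^+ n)^`(n).

(* P_n^{(-1,-1)} = (n-1)/(2(2n-1)) (L_n - L_{n-2}),  n >= 2 *)
Definition jacobi_m1 (n : nat) : {poly R} :=
  ((n%:R - 1) / (2 * (2 * n%:R - 1))) *: (legendre n - legendre n.-2).

(* psi_{m+1} = sqrt(2(2m+1))/m P_{m+1}^{(-1,-1)} ; [psi m] denotes psi_{m+1} *)
Definition psi (m : nat) : {poly R} :=
  (Num.sqrt (2 * (2 * m%:R + 1)) / m%:R) *: jacobi_m1 m.+1.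

Definition phi (m : nat) : {poly R} :=
  Num.sqrt ((2 * m%:R + 1) / 2) *: legendre m.

(* M_{mn} = (psi_{n+1}, psi_{m+1}),  S_{mn} = (phi_n', phi_m'),  m,n = 1..N-1 *)
Definition Mmx (N : nat) : 'M[R]_(N.-1) :=
  \matrix_(i, j) ip (psi j.+1) (psi i.+1).
Definition Smx (N : nat) : 'M[R]_(N.-1) :=
  \matrix_(i, j) ip (phi j.+1)^`() (phi i.+1)^`().

Notation "A *t B" := (tensmx A B) (at level 40, left associativity).

Definition blockA (n : nat) (S M : 'M[R]_n) (kappa : R)
  : 'M[R]_(n * n * n + n * n * n) :=
  let I := (1%:M : 'M[R]_n) in
  let A11 := S *t M *t I + S *t I *t M + I *t M *t S + I *t S *t M
             + 2%:R *: (I *t I *t I) + kappa *: (I *t I *t M + I *t M *t I) in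
  let A22 := M *t S *t I + S *t I *t M + M *t I *t S + I *t S *t M
             + 2%:R *: (I *t I *t I) + kappa *: (I *t I *t M + M *t I *t I) in
  let A12 := S *t I *t M + I *t S *t M + I *t I *t I + kappa *: (I *t I *t M) in
  block_mx A11 A12 A12 A22.

Definition Amx (N : nat) (kappa : R) := blockA (Smx N) (Mmx N) kappa.
Definition Atilde (N : nat) (kappa : R) := blockA (invmx (Mmx N)) (Mmx N) kappa.

End Defs.

From HB Require Import structures.
From mathcomp Require Import all_boot all_order all_algebra.
From mathcomp Require Import reals.
From mathcomp.real_closed Require Import mxtens.
From mathcomp Require Import ring lra zify.
Set Implicit Arguments. Unset Strict Implicit. Unset Printing Implicit Defensive.
Import Order.TTheory GRing.Theory Num.Theory.
Local Open Scope ring_scope.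

(* Since blockA is affine in S, A - Ã = blockS (S - M^-1) M does not depend on kappa,
   and the eigenspace of Ã^-1 A for the eigenvalue 1 is the kernel of A - Ã.
   Expanding psi_j and phi_j' in the orthonormal basis (phi_i) gives M = H^T H and
   S = F^T F, and integration by parts (psi_j' = phi_j, psi_j(+-1) = 0) gives
   F^T H = -I.  Hence S - M^-1 = G^T G with G = F + H M^-1 orthogonal to H; G has
   rank 2, being orthogonal to H of rank N - 1 in dimension N + 1 while the values at
   +-1 see two independent columns.  The quadratic form of blockS (G^T G) (H^T H) is
   a sum of six squared norms of Kronecker products of G, H and I, so its kernel is
   (ker G^T G)^(x3) in each of the two blocks, of dimension (N - 3)^3 each. *)

Section Integral.
Variable R : realType.
Implicit Types p q : {poly R}.

Lemma poly_int11E n p : (size p <= n)%N ->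
  poly_int11 p = \sum_(i < n) p`_i * ((1 - (-1) ^+ i.+1) / i.+1%:R).
Proof.
move=> hn; rewrite /poly_int11.
rewrite (big_ord_widen n (fun i => p`_i * ((1 - (-1) ^+ i.+1) / i.+1%:R)) hn) big_mkcond.
apply: eq_bigr => i _; case: ifP => // /negbT.
by rewrite -leqNgt => h; rewrite nth_default // mul0r.
Qed.

Lemma poly_int11_0 : poly_int11 (0 : {poly R}) = 0.
Proof. by rewrite /poly_int11 size_poly0 big_ord0. Qed.

Lemma poly_int11D p q : poly_int11 (p + q) = poly_int11 p + poly_int11 q.
Proof.
set n := maxn (size p) (size q).
rewrite (@poly_int11E n) ?(leq_trans (size_polyD _ _)) //.
rewrite (@poly_int11E n p) ?leq_maxl // (@poly_int11E n q) ?leq_maxr // -big_split.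
by apply: eq_bigr => i _; rewrite coefD mulrDl.
Qed.

Lemma poly_int11Z c p : poly_int11 (c *: p) = c * poly_int11 p.
Proof.
rewrite (@poly_int11E (size p)) ?size_scale_leq // /poly_int11 mulr_sumr.
by apply: eq_bigr => i _; rewrite coefZ mulrA.
Qed.

HB.instance Definition _ := GRing.isNmodMorphism.Build {poly R} R
  (@poly_int11 R) (poly_int11_0, poly_int11D).
HB.instance Definition _ := GRing.isScalable.Build R {poly R} R *%R
  (@poly_int11 R) poly_int11Z.

Lemma size_deriv_pred p : (size p^`() <= (size p).-1)%N.
Proof.
have [->|/lt_size_deriv h] := eqVneq p 0; first by rewrite deriv0 size_poly0.
by rewrite -ltnS (leq_trans h) // leqSpred.
Qed.

Lemma poly_int11_deriv p : poly_int11 p^`() = p.[1] - p.[-1].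
Proof.
rewrite (@poly_int11E (size p)) ?(leq_trans (size_deriv_pred p) (leq_pred _)) //.
rewrite !horner_coef -sumrB.
case E: (size p) => [|n]; first by rewrite !big_ord0.
rewrite big_ord_recr /= [in RHS]big_ord_recl /=.
rewrite coef_deriv (nth_default 0 (_ : (size p <= n.+1)%N)) ?E //.
rewrite mul0rn mul0r addr0 expr0 subrr add0r.
apply: eq_bigr => i _; rewrite coef_deriv expr1n exprS mulN1r opprK.
have h : (i.+1%:R : R) != 0 by rewrite pnatr_eq0.
rewrite /bump leq0n add1n -mulr_natr; field; by rewrite nat1r.
Qed.

End Integral.

Section InnerProduct.
Variable R : realType.
Implicit Types p q r : {poly R}.

Lemma ipC p q : ip p q = ip q p.
Proof. by rewrite /ip mulrC. Qed.

Lemma ip0 p : ip p 0 = 0.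
Proof. by rewrite /ip mulr0 raddf0. Qed.

Lemma ipD p q r : ip p (q + r) = ip p q + ip p r.
Proof. by rewrite /ip mulrDr raddfD. Qed.

Lemma ipZ p c q : ip p (c *: q) = c * ip p q.
Proof. by rewrite /ip -scalerAr linearZ. Qed.

HB.instance Definition _ p := GRing.isNmodMorphism.Build {poly R} R (ip p)
  (ip0 p, ipD p).
HB.instance Definition _ p := GRing.isScalable.Build R {poly R} R *%R (ip p)
  (ipZ p).

Lemma ipZl c p q : ip (c *: p) q = c * ip p q.
Proof. by rewrite ipC linearZ ipC. Qed.

Lemma ipBl p q r : ip (p - q) r = ip p r - ip q r.
Proof. by rewrite ipC linearB /= ![ip r _]ipC. Qed.

Lemma ip_suml (I : Type) (s : seq I) (F : I -> {poly R}) q :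
  ip (\sum_(i <- s) F i) q = \sum_(i <- s) ip (F i) q.
Proof. by rewrite ipC linear_sum; apply: eq_bigr => i _; rewrite ipC. Qed.

Lemma ip_deriv_parts p q : ip p^`() q = (p * q).[1] - (p * q).[-1] - ip p q^`().
Proof. by rewrite -poly_int11_deriv /ip derivM raddfD addrK. Qed.

End InnerProduct.

Section Legendre.
Variable R : realType.
Implicit Types p q : {poly R}.
Local Notation L := (@legendre R).

Lemma deriv_XsubC_expSM (a : R) n q :
  (('X - a%:P) ^+ n.+1 * q)^`() =
  ('X - a%:P) ^+ n * (n.+1%:R%:P * q + ('X - a%:P) * q^`()).
Proof.
rewrite derivM deriv_exp derivXsubC mul1r /= -mulr_natr exprS.
rewrite -[_ *+ _]mulr_natr polyC_natr; ring.
Qed.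

Lemma derivn_XsubC_expM_root (a : R) n k q : (k < n)%N ->
  (('X - a%:P) ^+ n * q)^`(k).[a] = 0.
Proof.
elim: n k q => [|n IH] [|k] q //= hk.
  by rewrite hornerM horner_exp hornerXsubC subrr expr0n /= mul0r.
by rewrite -derivnS derivSn deriv_XsubC_expSM IH.
Qed.

Lemma derivn_XsubC_expM_root_eq (a : R) n q :
  (('X - a%:P) ^+ n * q)^`(n).[a] = n`!%:R * q.[a].
Proof.
elim: n q => [|n IH] q; first by rewrite expr0 mul1r derivn0 mul1r.
rewrite derivSn deriv_XsubC_expSM IH hornerD !hornerM hornerXsubC subrr.
by rewrite mul0r addr0 hornerC factS natrM mulrA [n.+1%:R * _]mulrC.
Qed.

Definition rodrigues n : {poly R} := ('X ^+ 2 - 1) ^+ n.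

Lemma rodriguesE n :
  rodrigues n = ('X - 1%:P) ^+ n * ('X - (-1)%:P) ^+ n.
Proof. by rewrite /rodrigues -exprMn polyCN polyC1; congr (_ ^+ _); ring. Qed.

Lemma rodrigues_derivn1 n k : (k < n)%N -> (rodrigues n)^`(k).[1] = 0.
Proof. by move=> h; rewrite rodriguesE derivn_XsubC_expM_root. Qed.

Lemma rodrigues_derivnN1 n k : (k < n)%N -> (rodrigues n)^`(k).[-1] = 0.
Proof. by move=> h; rewrite rodriguesE mulrC derivn_XsubC_expM_root. Qed.

Lemma rodrigues_derivn_n1 n : (rodrigues n)^`(n).[1] = n`!%:R * 2 ^+ n.
Proof.
by rewrite rodriguesE derivn_XsubC_expM_root_eq horner_exp hornerXsubC opprK.
Qed.

Lemma rodrigues_derivn_nN1 n : (rodrigues n)^`(n).[-1] = n`!%:R * (-2) ^+ n.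
Proof.
rewrite rodriguesE mulrC derivn_XsubC_expM_root_eq horner_exp hornerXsubC.
by congr (_ * _ ^+ _); ring.
Qed.

Lemma ip_rodrigues_derivn n k q : (k <= n)%N ->
  ip q (rodrigues n)^`(k) = (-1) ^+ k * ip q^`(k) (rodrigues n).
Proof.
elim: k q => [|k IH] q hk; first by rewrite !derivn0 mul1r.
rewrite derivnS ipC ip_deriv_parts !hornerM rodrigues_derivn1 ?rodrigues_derivnN1 //.
rewrite !mul0r subrr sub0r ipC IH ?(ltnW hk) // -derivSn exprS; ring.
Qed.

Lemma monic_rodrigues n : rodrigues n \is monic.
Proof. by apply: monic_exp; exact: (monicXnsubC 1 (isT : (0 < 2)%N)). Qed.

Lemma size_rodrigues n : size (rodrigues n) = (2 * n).+1.
Proof.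
rewrite (polySpred (monic_neq0 (monic_rodrigues n))) size_exp.
by rewrite (size_XnsubC 1 (isT : (0 < 2)%N)).
Qed.

Lemma rodrigues_coef2n n : (rodrigues n)`_(2 * n) = 1.
Proof.
by have /monicP := monic_rodrigues n; rewrite /lead_coef size_rodrigues.
Qed.

Definition legendre_scale n : R := (2 ^+ n * (n`!)%:R)^-1.

Lemma legendreE n : L n = legendre_scale n *: (rodrigues n)^`(n).
Proof. by []. Qed.

Lemma legendre_scale_neq0 n : legendre_scale n != 0.
Proof. by rewrite invr_eq0 mulf_neq0 ?expf_neq0 ?pnatr_eq0 -?lt0n ?fact_gt0. Qed.

Lemma coef_legendre n i :
  (L n)`_i = legendre_scale n * ((rodrigues n)`_(n + i) *+ (n + i) ^_ n).
Proof. by rewrite legendreE coefZ coef_derivn. Qed.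

Lemma size_legendre n : (size (L n) <= n.+1)%N.
Proof.
apply/leq_sizeP => j hj; rewrite coef_legendre nth_default ?mul0rn ?mulr0 //.
by rewrite size_rodrigues; lia.
Qed.

Lemma legendre_coef_gt n j : (n < j)%N -> (L n)`_j = 0.
Proof. by move=> h; rewrite nth_default // (leq_trans (size_legendre _)). Qed.

Lemma legendre_coefn n :
  (L n)`_n = legendre_scale n * ((2 * n)`!%:R / n`!%:R).
Proof.
rewrite coef_legendre addnn -mul2n rodrigues_coef2n; congr (_ * _).
have h : (n <= 2 * n)%N by rewrite leq_pmull.
rewrite -(ffact_fact h) (_ : (2 * n - n = n)%N); last by lia.
by rewrite natrM mulrK // unitfE pnatr_eq0 -lt0n fact_gt0.
Qed.

Lemma legendre_coefn_neq0 n : (L n)`_n != 0.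
Proof.
rewrite legendre_coefn mulf_neq0 ?legendre_scale_neq0 //.
by rewrite mulf_neq0 ?invr_eq0 ?pnatr_eq0 -?lt0n ?fact_gt0.
Qed.

Lemma horner_legendre1 n : (L n).[1] = 1.
Proof.
rewrite legendreE hornerZ rodrigues_derivn_n1 /legendre_scale mulrC.
by rewrite [n`!%:R * _]mulrC mulfV // mulf_neq0 ?expf_neq0 ?pnatr_eq0 -?lt0n ?fact_gt0.
Qed.

Lemma horner_legendreN1 n : (L n).[-1] = (-1) ^+ n.
Proof.
rewrite legendreE hornerZ rodrigues_derivn_nN1 /legendre_scale.
have h1 : (n`!%:R : R) != 0 by rewrite pnatr_eq0 -lt0n fact_gt0.
have h2 : (2 ^+ n : R) != 0 by rewrite expf_neq0 // pnatr_eq0.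
by rewrite -mulN1r exprMn; field; apply/andP.
Qed.

Lemma legendre_orthogonal n q : (size q <= n)%N -> ip q (L n) = 0.
Proof.
move=> h; rewrite legendreE linearZ /= ip_rodrigues_derivn // derivn_poly0 //.
by rewrite ipC ip0 !mulr0.
Qed.

Lemma derivn_size_le p n : (size p <= n.+1)%N -> p^`(n) = (p`_n *+ n`!)%:P.
Proof.
move=> h; apply/polyP => i; rewrite coef_derivn coefC.
case: i => [|i] /=; first by rewrite addn0 ffactnn.
by rewrite nth_default ?mul0rn // (leq_trans h) // addnS ltnS leq_addr.
Qed.

Lemma deriv_X_rodriguesS n : ('X * rodrigues n.+1)^`() =
  (2 * n + 3)%:R *: rodrigues n.+1 + (2 * n + 2)%:R *: rodrigues n.
Proof.
rewrite /rodrigues derivM derivX mul1r deriv_exp !derivE /= exprS.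
rewrite !mulr1 mul1r subr0 -mulr_natr -!mul_polyC !polyC_natr.
set Y := (_ ^+ n); ring.
Qed.

Lemma int_rodriguesS n : poly_int11 (rodrigues n.+1) =
  - ((2 * n + 2)%:R / (2 * n + 3)%:R) * poly_int11 (rodrigues n).
Proof.
have := poly_int11_deriv ('X * rodrigues n.+1).
rewrite deriv_X_rodriguesS linearD !linearZ /= !hornerM !hornerX.
have := rodrigues_derivn1 (ltn0Sn n); have := rodrigues_derivnN1 (ltn0Sn n).
rewrite !derivn0 => -> ->; rewrite !mulr0 subrr => /eqP.
rewrite addr_eq0 => /eqP e.
have hn : (2 * n + 3)%:R != 0 :> R by rewrite pnatr_eq0 addn3.
apply: (mulfI hn); rewrite e.
by rewrite mulNr mulrN mulrA mulrCA mulfV // mulr1.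
Qed.

Lemma int_rodrigues n : poly_int11 (rodrigues n) =
  (-1) ^+ n * 2 * (2 ^+ n * n`!%:R) ^+ 2 / (2 * n).+1`!%:R.
Proof.
elim: n => [|n IH].
  rewrite /rodrigues expr0 /poly_int11 size_poly1 big_ord1 -polyC1 coefC /=.
  rewrite expr1 opprK mul1r muln0 fact0 (factS 0) fact0.
  by rewrite !expr0 !mul1r expr1n mulr1 !divr1.
rewrite int_rodriguesS IH.
have -> : ((2 * n.+1).+1`! = (2 * n + 3) * (2 * n + 2) * (2 * n).+1`!)%N.
  rewrite (_ : (2 * n.+1).+1 = (2 * n).+1.+2)%N; last by lia.
  by rewrite !factS; lia.
rewrite [(n.+1)`!]factS.
have := fact_gt0 n; have := fact_gt0 (2 * n).+1.
move: (n`!) ((2 * n).+1`!) => f g hg hf.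
rewrite !exprS; move: ((-1) ^+ n) (2 ^+ n) => s t.
have hn := ler0n R n; have hf' : 0 < f%:R :> R by rewrite ltr0n.
have hg' : 0 < g%:R :> R by rewrite ltr0n.
by field; rewrite !gt_eqF //; lra.
Qed.

Lemma ip_legendre_diag n : ip (L n) (L n) = 2 / (2 * n + 1)%:R.
Proof.
rewrite {2}legendreE linearZ /= ip_rodrigues_derivn // derivn_size_le ?size_legendre //.
rewrite /ip mul_polyC linearZ /= int_rodrigues legendre_coefn /legendre_scale.
rewrite factS addn1 !natrM.
have := fact_gt0 n; have := fact_gt0 (2 * n).
move: (n`!) ((2 * n)`!) => f g hg hf.
have hn := ler0n R n; have hf' : 0 < f%:R :> R by rewrite ltr0n.
have hg' : 0 < g%:R :> R by rewrite ltr0n.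
have hs : ((-1) ^+ n * (-1) ^+ n : R) = 1 by rewrite -exprMn mulrNN mulr1 expr1n.
transitivity ((-1) ^+ n * (-1) ^+ n * (2 / (2 * n).+1%:R) : R); last first.
  by rewrite hs mul1r.
rewrite -mulr_natr; move: ((-1) ^+ n) => s.
by field; rewrite mul1r expf_neq0 ?pnatr_eq0 // !gt_eqF //; lra.
Qed.

Lemma legendre0 : L 0 = 1.
Proof.
by rewrite legendreE /legendre_scale /rodrigues !expr0 derivn0 mul1r invr1 scale1r.
Qed.

Lemma legendre1 : L 1 = 'X.
Proof.
rewrite legendreE /legendre_scale /rodrigues !expr1 derivn1 !derivE /= subr0.
by rewrite -scaler_nat scalerA mulr1 mulVf ?scale1r // pnatr_eq0.
Qed.

Lemma legendre_coefnS m :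
  (L m.+1)`_m.+1 * m.+1%:R = (2 * m + 1)%:R * (L m)`_m.
Proof.
rewrite !legendre_coefn /legendre_scale.
have -> : ((2 * m.+1)`! = (2 * m + 2) * (2 * m + 1) * (2 * m)`!)%N.
  rewrite (_ : (2 * m.+1 = (2 * m).+2)%N); last by lia.
  by rewrite !factS; lia.
rewrite [m.+1`!]factS !natrM exprS.
have := fact_gt0 m; have := fact_gt0 (2 * m).
move: (m`!) ((2 * m)`!) => f g hg hf.
have hm := ler0n R m; have hf' : 0 < f%:R :> R by rewrite ltr0n.
have hg' : 0 < g%:R :> R by rewrite ltr0n.
have h2 : (2 ^+ m : R) != 0 by rewrite expf_neq0 // pnatr_eq0.
move: (2 ^+ m) h2 => t ht.
by field; rewrite ht !gt_eqF //; lra.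
Qed.

End Legendre.

Section Basis.
Variable R : realType.
Implicit Types p q : {poly R}.
Local Notation L := (@legendre R).
Local Notation phi := (@phi R).

Definition phi_scale (m : nat) : R := Num.sqrt ((2 * m%:R + 1) / 2).

Lemma phi_scale_gt0 m : 0 < phi_scale m.
Proof. by rewrite sqrtr_gt0; have := ler0n R m; lra. Qed.

Lemma phi_scale_sqr m : phi_scale m ^+ 2 = (2 * m%:R + 1) / 2.
Proof. by rewrite sqr_sqrtr //; have := ler0n R m; lra. Qed.

Lemma phiE m : phi m = phi_scale m *: L m.
Proof. by []. Qed.

Lemma legendre_phiE m : L m = (phi_scale m)^-1 *: phi m.
Proof. by rewrite phiE scalerA mulVf ?scale1r // gt_eqF // phi_scale_gt0. Qed.

Lemma ip_phi i j : ip (phi i) (phi j) = (i == j)%:R.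
Proof.
rewrite !phiE ipZl linearZ /=.
have [hij|hij|<-] := ltngtP i j.
- by rewrite legendre_orthogonal ?mulr0 // (leq_trans (size_legendre _ _)).
- by rewrite ipC legendre_orthogonal ?mulr0 // (leq_trans (size_legendre _ _)).
rewrite ip_legendre_diag mulrA -expr2 phi_scale_sqr natrD natrM /=.
by field; apply: lt0r_neq0; have := ler0n R i; lra.
Qed.

Lemma legendre_span k p : (size p <= k)%N ->
  exists c : nat -> R, p = \sum_(i < k) c i *: L i.
Proof.
elim: k p => [|k IH] p hp.
  by exists (fun _ => 0); rewrite big_ord0; apply/eqP; rewrite -size_poly_leq0.
set d := p`_k / (L k)`_k.
have hq : (size (p - d *: L k)%R <= k)%N.
  apply/leq_sizeP => j hj; rewrite coefB coefZ.
  have [->|hjk] := eqVneq j k; first by rewrite mulfVK ?subrr ?legendre_coefn_neq0.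
  rewrite !nth_default ?mulr0 ?subrr //.
    by apply: leq_trans (size_legendre _ _) _; lia.
  by apply: leq_trans hp _; lia.
have [c hc] := IH _ hq.
exists (fun i => if i == k then d else c i).
rewrite big_ord_recr /= eqxx -[p](subrK (d *: L k)) hc; congr (_ + _).
by apply: eq_bigr => i _; rewrite ltn_eqF.
Qed.

Lemma phi_expansion k p : (size p <= k)%N ->
  p = \sum_(i < k) ip p (phi i) *: phi i.
Proof.
move=> /legendre_span [c ->].
have [e ->] : exists e : nat -> R, \sum_(i < k) c i *: L i = \sum_(i < k) e i *: phi i.
  exists (fun i => c i / phi_scale i).
  by apply: eq_bigr => i _; rewrite legendre_phiE scalerA.
apply: eq_bigr => j _; congr (_ *: _).
rewrite ip_suml (bigD1 j) //= ipZl ip_phi eqxx mulr1 big1 ?addr0 // => i ij.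
by rewrite ipZl ip_phi (_ : (i == j :> nat) = false) ?mulr0 //; exact: negPf.
Qed.

Lemma ip_phi_parseval k p q : (size p <= k)%N ->
  ip p q = \sum_(i < k) ip p (phi i) * ip q (phi i).
Proof.
move=> hp; rewrite {1}(phi_expansion hp) ip_suml.
by apply: eq_bigr => i _; rewrite ipZl [ip (phi i) _]ipC.
Qed.

Lemma size_phi m : (size (phi m) <= m.+1)%N.
Proof. by rewrite phiE (leq_trans (size_scale_leq _ _)) ?size_legendre. Qed.

Lemma size_phi_deriv m : (size (phi m)^`() <= m)%N.
Proof. by apply: leq_trans (size_deriv_pred _) _; have := size_phi m; case: size. Qed.

Lemma deriv_legendreSB m : (0 < m)%N ->
  (L m.+1 - L m.-1)^`() = (2 * m + 1)%:R *: L m.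
Proof.
move=> hm; apply/eqP; rewrite -subr_eq0; apply/eqP.
set r := (_ - _)%R.
have hsz : (size r <= m)%N.
  apply/leq_sizeP => j hj; rewrite /r coefB coefZ coef_deriv coefB.
  have [->|hjm] := eqVneq j m.
    rewrite (@legendre_coef_gt _ m.-1 m.+1); last by lia.
    by rewrite subr0 -[_ *+ m.+1]mulr_natr legendre_coefnS subrr.
  rewrite (@legendre_coef_gt _ m.+1 j.+1); last by lia.
  rewrite (@legendre_coef_gt _ m.-1 j.+1); last by lia.
  by rewrite (@legendre_coef_gt _ m j) ?subrr ?mul0rn ?mulr0 ?subrr //; lia.
rewrite (phi_expansion hsz) big1 // => i _.
have hi := ltn_ord i.
rewrite /r ipBl ipZl [ip (L m) _]ipC legendre_orthogonal ?mulr0 ?subr0; last first.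
  exact: leq_trans (size_phi _) _.
rewrite ip_deriv_parts !hornerM !hornerD !hornerN !horner_legendre1 !horner_legendreN1.
rewrite (_ : (-1) ^+ m.+1 = (-1) ^+ m.-1 :> R); last first.
  by case: (m) hm => // m0 _; rewrite !exprS !mulN1r opprK.
rewrite !subrr !mul0r subrr sub0r ipBl ![ip (L _) _]ipC.
rewrite !legendre_orthogonal ?subrr ?oppr0 ?scale0r //;
  by apply: leq_trans (size_phi_deriv _) _; lia.
Qed.

Local Notation psi := (@psi R).

Definition psi_scale (m : nat) : R := Num.sqrt (2 * (2 * m%:R + 1)) / m%:R *
  ((m.+1%:R - 1) / (2 * (2 * m.+1%:R - 1))).

Lemma psiE m : psi m = psi_scale m *: (L m.+1 - L m.-1).
Proof. by rewrite /psi /jacobi_m1 scalerA. Qed.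

Lemma phi_scale_sqrt m : phi_scale m = Num.sqrt (2 * (2 * m%:R + 1)) / 2.
Proof.
have hm := ler0n R m.
have h0 : 0 <= Num.sqrt (2 * (2 * m%:R + 1)) / 2 :> R.
  by rewrite divr_ge0 ?sqrtr_ge0.
rewrite /phi_scale -[RHS]ger0_norm // -sqrtr_sqr expr_div_n sqr_sqrtr; last lra.
by congr Num.sqrt; field.
Qed.

Lemma deriv_psi m : (0 < m)%N -> (psi m)^`() = phi m.
Proof.
move=> hm; rewrite psiE derivZ deriv_legendreSB // scalerA phiE; congr (_ *: _).
rewrite phi_scale_sqrt /psi_scale -!natr1 natrD natrM.
have hm' : 0 < m%:R :> R by rewrite ltr0n.
by field; apply/andP; split; apply: lt0r_neq0; lra.
Qed.

Lemma horner_psi1 m : (0 < m)%N -> (psi m).[1] = 0.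
Proof.
by move=> hm; rewrite psiE hornerZ hornerD hornerN !horner_legendre1 subrr mulr0.
Qed.

Lemma horner_psiN1 m : (0 < m)%N -> (psi m).[-1] = 0.
Proof.
move=> hm; rewrite psiE hornerZ hornerD hornerN !horner_legendreN1.
by case: m hm => // m _; rewrite !exprS !mulN1r opprK subrr mulr0.
Qed.

Lemma size_psi m : (size (psi m) <= m.+2)%N.
Proof.
rewrite psiE (leq_trans (size_scale_leq _ _)) // (leq_trans (size_polyD _ _)) //.
by rewrite geq_max size_polyN size_legendre (leq_trans (size_legendre _ _)) //; lia.
Qed.

Lemma deriv_phi1 : (phi 1)^`() = (phi_scale 1)%:P.
Proof. by rewrite phiE derivZ legendre1 derivX -mul_polyC mulr1. Qed.

Lemma deriv_phi2 : (phi 2)^`() = (3 * phi_scale 2) *: 'X.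
Proof.
have := deriv_legendreSB (isT : (0 < 1)%N).
rewrite /= legendre0 derivB derivC subr0 legendre1 => h.
by rewrite phiE derivZ h scalerA mulrC.
Qed.

End Basis.

Section TensorProduct.
Variable R : comPzRingType.

Lemma tensmxBl m n p q (A B : 'M[R]_(m, n)) (C : 'M[R]_(p, q)) :
  (A - B) *t C = A *t C - B *t C.
Proof. by apply/matrixP => i j; rewrite !mxE mulrBl. Qed.

Lemma tensmxBr m n p q (A : 'M[R]_(m, n)) (B C : 'M[R]_(p, q)) :
  A *t (B - C) = A *t B - A *t C.
Proof. by apply/matrixP => i j; rewrite !mxE mulrBr. Qed.

Lemma tensmx11 m n : (1%:M : 'M[R]_m) *t (1%:M : 'M[R]_n) = 1%:M.
Proof.
apply/matrixP => i j.
case: (mxtens_indexP i) => i1 i2; case: (mxtens_indexP j) => j1 j2.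
rewrite tensmxE !mxE (inj_eq (can_inj (@mxtens_indexK _ _))) xpair_eqE.
by rewrite -natrM mulnb.
Qed.

Definition blockS n (D M : 'M[R]_n) : 'M[R]_(n * n * n + n * n * n) :=
  let I := (1%:M : 'M[R]_n) in
  block_mx (D *t M *t I + D *t I *t M + I *t M *t D + I *t D *t M)
           (D *t I *t M + I *t D *t M)
           (D *t I *t M + I *t D *t M)
           (M *t D *t I + D *t I *t M + M *t I *t D + I *t D *t M).

End TensorProduct.

Lemma blockA_sub (R : realType) n (S S' M : 'M[R]_n) (kappa : R) :
  blockA S M kappa - blockA S' M kappa = blockS (S - S') M.
Proof.
rewrite /blockA /blockS /= opp_block_mx add_block_mx.
by congr block_mx; apply/matrixP => i j; rewrite !mxE; ring.
Qed.

Section QuadraticForms.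
Variable R : realFieldType.

Definition sqnorm k (x : 'rV[R]_k) : R := (x *m x^T) 0 0.

Lemma sqnormE k (x : 'rV[R]_k) : sqnorm x = \sum_j x 0 j ^+ 2.
Proof. by rewrite /sqnorm mxE; apply: eq_bigr => j _; rewrite mxE expr2. Qed.

Lemma sqnorm_ge0 k (x : 'rV[R]_k) : 0 <= sqnorm x.
Proof. by rewrite sqnormE sumr_ge0 // => j _; rewrite sqr_ge0. Qed.

Lemma sqnorm_eq0 k (x : 'rV[R]_k) : sqnorm x = 0 -> x = 0.
Proof.
rewrite sqnormE => /psumr_eq0P h; apply/matrixP => i j.
rewrite [i]ord1 mxE; apply/eqP; rewrite -sqrf_eq0; apply/eqP.
by apply: h => // l _; rewrite sqr_ge0.
Qed.

Definition bform m (X : 'M[R]_m) (a b : 'rV[R]_m) : R := (a *m X *m b^T) 0 0.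

Lemma bformD m (X Y : 'M[R]_m) a b : bform (X + Y) a b = bform X a b + bform Y a b.
Proof. by rewrite /bform mulmxDr mulmxDl mxE. Qed.

Lemma bformDl m (X : 'M[R]_m) a b c : bform X (a + b) c = bform X a c + bform X b c.
Proof. by rewrite /bform !mulmxDl mxE. Qed.

Lemma bformDr m (X : 'M[R]_m) a b c : bform X c (a + b) = bform X c a + bform X c b.
Proof. by rewrite /bform linearD mulmxDr mxE. Qed.

Lemma bformC m (X : 'M[R]_m) a b : X^T = X -> bform X a b = bform X b a.
Proof.
move=> hX; rewrite /bform.
transitivity ((b *m X *m a^T)^T 0 0); last by rewrite mxE.
by rewrite !trmx_mul trmxK hX mulmxA.
Qed.

Lemma bform_block m (A B C D : 'M[R]_m) (u w : 'rV[R]_m) :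
  bform (block_mx A B C D) (row_mx u w) (row_mx u w) =
  bform A u u + bform C w u + bform B u w + bform D w w.
Proof.
by rewrite /bform mul_row_block tr_row_mx mul_row_col !mulmxDl !mxE addrA.
Qed.

Lemma bform_gram m q (Y : 'M[R]_(q, m)) x : bform (Y^T *m Y) x x = sqnorm (x *m Y^T).
Proof. by rewrite /bform /sqnorm trmx_mul trmxK !mulmxA. Qed.

Lemma bform_gram_ge0 m q (Y : 'M[R]_(q, m)) x : 0 <= bform (Y^T *m Y) x x.
Proof. by rewrite bform_gram sqnorm_ge0. Qed.

Lemma bform_gram_eq0 m q (Y : 'M[R]_(q, m)) x :
  bform (Y^T *m Y) x x = 0 -> x *m (Y^T *m Y) = 0.
Proof. by rewrite bform_gram mulmxA => /sqnorm_eq0 ->; rewrite mul0mx. Qed.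

Lemma mxrank_gram m q (Y : 'M[R]_(q, m)) : \rank (Y^T *m Y) = \rank Y.
Proof.
apply/eqP; rewrite eqn_leq mxrankM_maxr /=.
have sub : (kermx (Y^T *m Y) <= kermx Y^T)%MS.
  apply/sub_kermxP/row_matrixP => i; rewrite row_mul row0.
  have hx : row i (kermx (Y^T *m Y)) *m (Y^T *m Y) = 0.
    by rewrite -row_mul mulmx_ker row0.
  by apply: sqnorm_eq0; rewrite -bform_gram /bform hx mul0mx mxE.
have := mxrankS sub; rewrite !mxrank_ker mxrank_tr.
have := rank_leq_col Y; have := rank_leq_row (Y^T *m Y); lia.
Qed.

Lemma gram_unit p n (X : 'M[R]_(n, p)) (H : 'M[R]_(p, n)) :
  X *m H = 1%:M -> H^T *m H \in unitmx.
Proof.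
move=> hXH; rewrite -row_free_unit /row_free mxrank_gram eqn_leq rank_leq_col.
by apply: (mulmx1_min_rank (M := X) (N := 1%:M)); rewrite mulmx1.
Qed.

End QuadraticForms.

Section TripleKernel.
Variables (R : fieldType) (n : nat) (D : 'M[R]_n).
Local Notation I := (1%:M : 'M[R]_n).
Local Notation K := (row_base (kermx D)).

Lemma row_base_kermx_mul : K *m D = 0.
Proof. by apply/sub_kermxP; rewrite eq_row_base. Qed.

Lemma rank_tens3_row_base_kermx : \rank (K *t K *t K) = ((n - \rank D) ^ 3)%N.
Proof.
have /row_freeP [Kr hKr] := row_base_free (kermx D).
have hK3 : 1%:M *m (K *t K *t K) *m (Kr *t Kr *t Kr) = 1%:M.
  by rewrite mul1mx !tensmx_mul hKr !tensmx11.
rewrite -mxrank_ker !expnS expn0 muln1 mulnA.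
by apply/eqP; rewrite eqn_leq rank_leq_row (mulmx1_min_rank hK3).
Qed.

Lemma mulmx1B_ker m (x : 'rV[R]_m) (B Z : 'M[R]_m) :
  x *m B = 0 -> x *m (1%:M - B *m Z) = x.
Proof. by move=> hB; rewrite mulmxBr mulmx1 mulmxA hB mul0mx subr0. Qed.

Lemma sub_tens3_row_base_kermx (x : 'rV[R]_(n * n * n)) :
  x *m (D *t I *t I) = 0 -> x *m (I *t D *t I) = 0 -> x *m (I *t I *t D) = 0 ->
  (x <= K *t K *t K)%MS.
Proof.
move=> h1 h2 h3; set Z := pinvmx D; set P := 1%:M - D *m Z.
have [Y hY] : exists Y, P = Y *m K.
  apply/submxP; rewrite eq_row_base; apply/sub_kermxP.
  by rewrite mulmxBl mul1mx mulmxKpV // subrr.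
have hP : P *t P *t P = (1%:M - (D *t I *t I) *m (Z *t I *t I)) *m
    (1%:M - (I *t D *t I) *m (I *t Z *t I)) *m (1%:M - (I *t I *t D) *m (I *t I *t Z)).
  rewrite !tensmx_mul !mulmx1 -!tensmx11 -!(tensmxBl, tensmxBr).
  by rewrite !tensmx_mul !mulmx1 !mul1mx.
have <- : x *m (P *t P *t P) = x.
  by rewrite hP !mulmxA !mulmx1B_ker.
have -> : P *t P *t P = (Y *t Y *t Y) *m (K *t K *t K) by rewrite hY !tensmx_mul.
by rewrite mulmxA submxMl.
Qed.

End TripleKernel.

Lemma trmx_tens3_mul (R : comPzRingType) m1 n1 m2 n2 m3 n3
    (A : 'M[R]_(m1, n1)) (B : 'M[R]_(m2, n2)) (C : 'M[R]_(m3, n3)) :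
  (A *t B *t C)^T *m (A *t B *t C) = (A^T *m A) *t (B^T *m B) *t (C^T *m C).
Proof. by rewrite !trmx_tens !tensmx_mul. Qed.

Section BlockKernel.
Variables (R : realFieldType) (n : nat).
Local Notation I := (1%:M : 'M[R]_n).

Lemma bform_blockS (D M : 'M[R]_n) (u w : 'rV[R]_(n * n * n)) :
  D^T = D -> M^T = M ->
  bform (blockS D M) (row_mx u w) (row_mx u w) =
  bform (D *t M *t I) u u + bform (I *t M *t D) u u +
  bform (M *t D *t I) w w + bform (M *t I *t D) w w +
  bform (D *t I *t M) (u + w) (u + w) + bform (I *t D *t M) (u + w) (u + w).
Proof.
move=> hD hM.
have s5 : (D *t I *t M)^T = D *t I *t M by rewrite !trmx_tens hD hM trmx1.
have s6 : (I *t D *t M)^T = I *t D *t M by rewrite !trmx_tens hD hM trmx1.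
rewrite /blockS bform_block !bformD !bformDl !bformDr.
rewrite (bformC w u s5) (bformC w u s6); ring.
Qed.

Lemma bform_tens3_gram_ge0 a b c (A : 'M[R]_(a, n)) (B : 'M[R]_(b, n))
    (C : 'M[R]_(c, n)) x :
  0 <= bform ((A^T *m A) *t (B^T *m B) *t (C^T *m C)) x x.
Proof. by rewrite -trmx_tens3_mul bform_gram_ge0. Qed.

Lemma bform_tens3_gram_eq0 a b c (A : 'M[R]_(a, n)) (B : 'M[R]_(b, n))
    (C : 'M[R]_(c, n)) x :
  bform ((A^T *m A) *t (B^T *m B) *t (C^T *m C)) x x = 0 ->
  x *m ((A^T *m A) *t (B^T *m B) *t (C^T *m C)) = 0.
Proof. by rewrite -trmx_tens3_mul; exact: bform_gram_eq0. Qed.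

Variables (q : nat) (G H : 'M[R]_(q, n)).
Hypothesis HtH_unit : H^T *m H \in unitmx.
Local Notation D := (G^T *m G).
Local Notation M := (H^T *m H).

Lemma blockS_gram_kernel (u w : 'rV[R]_(n * n * n)) :
  row_mx u w *m blockS D M = 0 ->
  [/\ u *m (D *t I *t I) = 0, u *m (I *t D *t I) = 0 & u *m (I *t I *t D) = 0] /\
  [/\ w *m (D *t I *t I) = 0, w *m (I *t D *t I) = 0 & w *m (I *t I *t D) = 0].
Proof.
move=> hv.
have gI : I = I^T *m I by rewrite trmx1 mulmx1.
have hD : D^T = D by rewrite trmx_mul trmxK.
have hM : M^T = M by rewrite trmx_mul trmxK.
have hz : bform (blockS D M) (row_mx u w) (row_mx u w) = 0.
  by rewrite /bform hv mul0mx mxE.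
rewrite bform_blockS // gI in hz.
have := bform_tens3_gram_ge0 G H I u; have := bform_tens3_gram_ge0 I H G u.
have := bform_tens3_gram_ge0 H G I w; have := bform_tens3_gram_ge0 H I G w.
have := bform_tens3_gram_ge0 G I H (u + w); have := bform_tens3_gram_ge0 I G H (u + w).
move=> g6 g5 g4 g3 g2 g1.
have gram_cancel a b c (A : 'M[R]_(a, n)) (B : 'M[R]_(b, n)) (C : 'M[R]_(c, n))
    (x : 'rV[R]_(n * n * n)) (Y Z : 'M[R]_(n * n * n)) :
    bform ((A^T *m A) *t (B^T *m B) *t (C^T *m C)) x x = 0 ->
    (A^T *m A) *t (B^T *m B) *t (C^T *m C) *m Y = Z -> x *m Z = 0.
  by move=> /bform_tens3_gram_eq0 h <-; rewrite mulmxA h mul0mx.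
have hMi : M *m invmx M = I by rewrite mulmxV.
(* All six Gram forms vanish; cancelling the invertible factor M leaves D alone. *)
have r1 : u *m (D *t I *t I) = 0.
  apply: (gram_cancel _ _ _ G H I u (I *t invmx M *t I)); first lra.
  by rewrite -gI !tensmx_mul hMi !mulmx1.
have r2 : u *m (I *t I *t D) = 0.
  apply: (gram_cancel _ _ _ I H G u (I *t invmx M *t I)); first lra.
  by rewrite -gI !tensmx_mul hMi !mulmx1.
have r3 : w *m (I *t D *t I) = 0.
  apply: (gram_cancel _ _ _ H G I w (invmx M *t I *t I)); first lra.
  by rewrite -gI !tensmx_mul hMi !mulmx1.
have r4 : w *m (I *t I *t D) = 0.
  apply: (gram_cancel _ _ _ H I G w (invmx M *t I *t I)); first lra.
  by rewrite -gI !tensmx_mul hMi !mulmx1.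
have r5 : (u + w) *m (D *t I *t I) = 0.
  apply: (gram_cancel _ _ _ G I H (u + w) (I *t I *t invmx M)); first lra.
  by rewrite -gI !tensmx_mul hMi !mulmx1.
have r6 : (u + w) *m (I *t D *t I) = 0.
  apply: (gram_cancel _ _ _ I G H (u + w) (I *t I *t invmx M)); first lra.
  by rewrite -gI !tensmx_mul hMi !mulmx1.
split; split => //.
- by rewrite -[u](addrK w) mulmxBl r6 r3 subr0.
- by rewrite -[w](addKr u) mulmxDl mulNmx r5 r1 oppr0 add0r.
Qed.

Lemma rank_kermx_blockS_gram :
  \rank (kermx (blockS D M)) = (2 * (n - \rank D) ^ 3)%N.
Proof.
set K := row_base (kermx D); set T := K *t K *t K.
have hKD : K *m D = 0 := row_base_kermx_mul D.
have sub1 : (block_mx T 0 0 T <= kermx (blockS D M))%MS.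
  apply/sub_kermxP; rewrite /blockS mulmx_block !mul0mx !addr0 !add0r.
  by rewrite !mulmxDr !tensmx_mul hKD !(tens0mx, tensmx0) !addr0 block_mx0.
have sub2 : (kermx (blockS D M) <= block_mx T 0 0 T)%MS.
  apply/row_subP => i; set v := row i _.
  have hv : v *m blockS D M = 0 by rewrite -row_mul mulmx_ker row0.
  rewrite -(hsubmxK v) in hv *.
  have [[u1 u2 u3] [w1 w2 w3]] := blockS_gram_kernel hv.
  have /submxP [a ->] := sub_tens3_row_base_kermx u1 u2 u3.
  have /submxP [b ->] := sub_tens3_row_base_kermx w1 w2 w3.
  have -> : row_mx (a *m T) (b *m T) = row_mx a b *m block_mx T 0 0 T.
    by rewrite mul_row_block !mulmx0 addr0 add0r.
  exact: submxMl.
have /eqmxP -> : (kermx (blockS D M) == block_mx T 0 0 T)%MS by rewrite sub1 sub2.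
by rewrite rank_diag_block_mx rank_tens3_row_base_kermx addnn mul2n.
Qed.

End BlockKernel.

Section GramDifference.
Variables (R : realFieldType) (n p : nat) (H F : 'M[R]_(p, n)).
Hypothesis FtH : F^T *m H = - 1%:M.
Local Notation M := (H^T *m H).
(* G = F - H M^-1 H^T F is the component of F orthogonal to the columns of H. *)
Local Notation G := (F + H *m invmx M).

Lemma gram_H_unit : M \in unitmx.
Proof. by apply: (@gram_unit _ _ _ (- F^T)); rewrite mulNmx FtH opprK. Qed.

Lemma trmx_inv_gram : (invmx M)^T = invmx M.
Proof. by rewrite trmx_inv trmx_mul trmxK. Qed.

Lemma trH_mulF : H^T *m F = - 1%:M.
Proof. by rewrite -[H^T *m F]trmxK trmx_mul trmxK FtH linearN /= trmx1. Qed.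

Lemma trG_mulH : G^T *m H = 0.
Proof.
rewrite [(F + _)^T]linearD /= trmx_mul trmx_inv_gram mulmxDl FtH -mulmxA.
by rewrite mulVmx ?gram_H_unit // addNr.
Qed.

Lemma gram_G : G^T *m G = F^T *m F - invmx M.
Proof.
rewrite [(F + _)^T]linearD /= trmx_mul trmx_inv_gram !mulmxDl !mulmxDr !mulmxA FtH.
rewrite -(mulmxA _ H^T F) trH_mulF -(mulmxA _ H^T H) mulVmx ?gram_H_unit //.
by rewrite mulNmx mul1mx mulmxN mulmx1 addNr addr0.
Qed.

Variables (E : 'M[R]_(2, p)) (Q : 'M[R]_(n, 2)).
Hypotheses (hp : p = (n + 2)%N) (EH : E *m H = 0) (EFQ : E *m F *m Q = 1%:M).

Lemma mxrank_G : \rank G = 2%N.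
Proof.
apply/eqP; rewrite eqn_leq; apply/andP; split; last first.
  apply: (mulmx1_min_rank (M := E) (N := Q)).
  by rewrite mulmxDr mulmxA EH mul0mx addr0.
have hH : (n <= \rank H)%N.
  by apply: (mulmx1_min_rank (M := - F^T) (N := 1%:M)); rewrite mulNmx FtH mulmx1 opprK.
have sub : (G^T <= kermx H)%MS by apply/sub_kermxP; exact: trG_mulH.
have := mxrankS sub; rewrite mxrank_tr mxrank_ker; lia.
Qed.

End GramDifference.

Section Coordinates.
Variables (R : realType) (k : nat).
Local Notation phi := (@phi R).
Local Notation psi := (@psi R).

Definition psi_coord_mx : 'M[R]_(k.+4, k.+2) := \matrix_(i, j) ip (psi j.+1) (phi i).
Definition dphi_coord_mx : 'M[R]_(k.+4, k.+2) :=
  \matrix_(i, j) ip (phi j.+1)^`() (phi i).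

Lemma size_psi_ord (j : 'I_k.+2) : (size (psi j.+1) <= k.+4)%N.
Proof. by apply: leq_trans (size_psi _ _) _; have := ltn_ord j; lia. Qed.

Lemma size_dphi_ord (j : 'I_k.+2) : (size (phi j.+1)^`() <= k.+4)%N.
Proof. by apply: leq_trans (size_phi_deriv _ _) _; have := ltn_ord j; lia. Qed.

Local Notation Hc := psi_coord_mx.
Local Notation Fc := dphi_coord_mx.

Lemma Mmx_gram : Mmx R k.+3 = Hc^T *m Hc.
Proof.
apply/matrixP => i j; rewrite !mxE (ip_phi_parseval _ (size_psi_ord j)).
by apply: eq_bigr => l _; rewrite !mxE mulrC.
Qed.

Lemma Smx_gram : Smx R k.+3 = Fc^T *m Fc.
Proof.
apply/matrixP => i j; rewrite !mxE (ip_phi_parseval _ (size_dphi_ord j)).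
by apply: eq_bigr => l _; rewrite !mxE mulrC.
Qed.

Lemma dphi_psi_coord : Fc^T *m Hc = - 1%:M.
Proof.
apply/matrixP => i j; rewrite !mxE.
have -> : \sum_l Fc^T i l * Hc l j = ip (phi i.+1)^`() (psi j.+1).
  by rewrite (ip_phi_parseval _ (size_dphi_ord i)); apply: eq_bigr => l _; rewrite !mxE.
rewrite ip_deriv_parts !hornerM horner_psi1 // horner_psiN1 // !mulr0 subrr sub0r.
by rewrite deriv_psi // ip_phi eqSS.
Qed.

Definition phi_eval_mx : 'M[R]_(2, k.+4) := \matrix_(r, i) (phi i).[(-1) ^+ r].

(* phi_1' is the constant phi_scale 1 and phi_2' = 3 phi_scale 2 X, so only the first
   two columns of E F are needed to invert it. *)
Definition dphi_eval_rinv : 'M[R]_(k.+2, 2) := \matrix_(j, c)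
  if j == 0 :> nat then (2 * phi_scale R 1)^-1
  else if j == 1 :> nat then (-1) ^+ c / (6 * phi_scale R 2) else 0.

Local Notation E := phi_eval_mx.

Lemma horner_phi_expansion (p : {poly R}) x : (size p <= k.+4)%N ->
  \sum_(i < k.+4) (phi i).[x] * ip p (phi i) = p.[x].
Proof.
move=> hp; rewrite [in RHS](phi_expansion hp) horner_sum.
by apply: eq_bigr => i _; rewrite [RHS]hornerZ mulrC.
Qed.

Lemma phi_eval_psi_coord : E *m Hc = 0.
Proof.
apply/matrixP => r j; rewrite !mxE.
transitivity (psi j.+1).[(-1) ^+ r].
  rewrite -(horner_phi_expansion _ (size_psi_ord j)).
  by apply: eq_bigr => i _; rewrite !mxE.
by case: r => [[|[|]]] //= _; rewrite ?expr0 ?expr1 ?horner_psi1 ?horner_psiN1.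
Qed.

Lemma phi_eval_dphi_coord r j : (E *m Fc) r j = ((phi j.+1)^`()).[(-1) ^+ r].
Proof.
rewrite !mxE -(horner_phi_expansion _ (size_dphi_ord j)).
by apply: eq_bigr => i _; rewrite !mxE.
Qed.

Lemma phi_eval_dphi_rinv : E *m Fc *m dphi_eval_rinv = 1%:M.
Proof.
apply/matrixP => r c; rewrite [LHS]mxE !big_ord_recl big1 ?addr0; last first.
  by move=> j _; rewrite !mxE /= mulr0.
rewrite !phi_eval_dphi_coord !mxE /= deriv_phi1 deriv_phi2 hornerC hornerZ hornerX.
have h1 := phi_scale_gt0 R 1; have h2 := phi_scale_gt0 R 2.
case: r => [[|[|]] hr] //; case: c => [[|[|]] hc] //=.
all: by rewrite ?expr0 ?expr1 /=; field; rewrite !gt_eqF.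
Qed.

End Coordinates.

Lemma mxrank_eigenspace1_invmx (R : fieldType) m (A B : 'M[R]_m) :
  B \in unitmx ->
  \rank (eigenspace (invmx B *m A)^T 1) = \rank (kermx (A - B)).
Proof.
move=> hB; rewrite /eigenspace !mxrank_ker -trmx1 -linearB /= mxrank_tr.
have -> : invmx B *m A - 1%:M = invmx B *m (A - B) by rewrite mulmxBr mulVmx.
by rewrite eqmxMfull // row_full_unit unitmx_inv.
Qed.

Theorem mainTheorem11 (R : realType) (N : nat) (kappa : R) :
  (4 <= N)%N ->
  Atilde N kappa \in unitmx ->
  \rank (eigenspace (invmx (Atilde N kappa) *m Amx N kappa)^T 1)
    = (2 * (N - 3) ^ 3)%N.
Proof.
case: N => [|[|[|k]]] // _ hA.
rewrite mxrank_eigenspace1_invmx // /Amx /Atilde blockA_sub Mmx_gram Smx_gram.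
have FtH := dphi_psi_coord R k.
rewrite -(gram_G FtH) rank_kermx_blockS_gram ?(gram_H_unit FtH) //.
have EH := phi_eval_psi_coord R k; have EFQ := phi_eval_dphi_rinv R k.
by rewrite mxrank_gram (mxrank_G FtH _ EH EFQ) ?addn2.
Qed.
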